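(* In the deterministic generalized top-$k$ selective gossip setting described in the context (with $G$ connected), for any two edges $\{a,b\},\{a',b'\}\in E$ we have $\alpha_{ab}=\alpha_{a'b'}$.
   Context: Fix integers $m\ge2$, $n\ge1$, $k\in[n]$. For $v\in\mathbb{R}^n$ let $\sigma$ be a permutation of $[n]$ with $v_{\sigma(1)}\ge\cdots\ge v_{\sigma(n)}$ and set $T_k(v)=\{j\in[n]: v_j\ge v_{\sigma(k)}\}$. Let $\{i_1(t),i_2(t)\}_{t\ge0}$ be a deterministic sequence of unordered pairs of distinct agents in $[m]$, and let $E$ be the set of pairs $\{a,b\}$ with $\{i_1(t),i_2(t)\}=\{a,b\}$ for infinitely many $t$; assume the graph $G=([m],E)$ is connected. Let $X(0)\in\mathbb{R}^{m\times n}$ and define $X(t)$ by: $S(t)=T_k(X_{i_1(t)}(t))\cup T_k(X_{i_2(t)}(t))$ (where $X_i(t)$ is row $i$), $X_{ij}(t+1)=\tfrac12(X_{i_1(t)j}(t)+X_{i_2(t)j}(t))$ if $i\in\{i_1(t),i_2(t)\}$ and $j\in S(t)$, and $X_{ij}(t+1)=X_{ij}(t)$ otherwise. The limit $X(\infty)=\lim_{t\to\infty}X(t)$ exists. For $\{a,b\}\in E$ let $\beta_{ab}(s)$ be the $s$-th time $t$ with $\{i_1(t),i_2(t)\}=\{a,b\}$, let $S^\infty_{ab}=\bigcap_{t\ge0}\bigcup_{s\ge t}S(\beta_{ab}(s))$, and $\alpha_{ab}=\min_{j\in S^\infty_{ab}}X_{aj}(\infty)$ (which also equals $\min_{j\in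 S^\infty_{ab}}X_{bj}(\infty)$). *)

From Stdlib Require Import Reals Relations.
Open Scope R_scope.

(* Conventions: agents are 0..m-1, coordinates are 0..n-1 (0-indexed),
   k is 1-indexed with 1 <= k <= n as in the paper, so v_{sigma(k)}
   becomes v (sigma (k-1)). *)

Definition sorting_perm (n : nat) (v : nat -> R) (sigma : nat -> nat) : Prop :=
  (forall p, (p < n)%nat -> (sigma p < n)%nat) /\
  (forall p q, (p < n)%nat -> (q < n)%nat -> sigma p = sigma q -> p = q) /\
  (forall p q, (p < q)%nat -> (q < n)%nat -> v (sigma p) >= v (sigma q)).

(* j \in T_k(v) (the value v_{sigma(k)} does not depend on the choice of sigma) *)
Definition in_Tk (n k : nat) (v : nat -> R) (j : nat) : Prop :=
  (j < n)%nat /\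
  exists sigma, sorting_perm n v sigma /\ v j >= v (sigma (k - 1)%nat).

Definition pair_is (i1 i2 : nat -> nat) (t a b : nat) : Prop :=
  (i1 t = a /\ i2 t = b) \/ (i1 t = b /\ i2 t = a).

Definition active (i1 i2 : nat -> nat) (t i : nat) : Prop :=
  i = i1 t \/ i = i2 t.

Definition in_S (n k : nat) (X : nat -> nat -> nat -> R)
    (i1 i2 : nat -> nat) (t j : nat) : Prop :=
  in_Tk n k (X t (i1 t)) j \/ in_Tk n k (X t (i2 t)) j.

Definition gossip_dynamics (m n k : nat) (X : nat -> nat -> nat -> R)
    (i1 i2 : nat -> nat) : Prop :=
  forall t i j, (i < m)%nat -> (j < n)%nat ->
    (active i1 i2 t i /\ in_S n k X i1 i2 t j ->
       X (S t) i j = (X t (i1 t) j + X t (i2 t) j) / 2) /\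
    (~ (active i1 i2 t i /\ in_S n k X i1 i2 t j) ->
       X (S t) i j = X t i j).

Definition in_E (m : nat) (i1 i2 : nat -> nat) (a b : nat) : Prop :=
  (a < m)%nat /\ (b < m)%nat /\ a <> b /\
  forall T, exists t, (t >= T)%nat /\ pair_is i1 i2 t a b.

Definition connected_E (m : nat) (i1 i2 : nat -> nat) : Prop :=
  forall a b, (a < m)%nat -> (b < m)%nat ->
    clos_refl_trans nat (in_E m i1 i2) a b.

(* j \in S^inf_{ab} = \bigcap_t \bigcup_{s >= t} S(beta_ab(s)), i.e. j lies in
   S(t') for infinitely many activation times t' of the pair {a,b} *)
Definition in_Sinf (n k : nat) (X : nat -> nat -> nat -> R)
    (i1 i2 : nat -> nat) (a b j : nat) : Prop :=
  forall T, exists t, (t >= T)%nat /\ pair_is i1 i2 t a b /\ in_S n k X i1 i2 t j.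

Definition is_alpha (n k : nat) (X : nat -> nat -> nat -> R) (Xinf : nat -> nat -> R)
    (i1 i2 : nat -> nat) (a b : nat) (alpha : R) : Prop :=
  (exists j, in_Sinf n k X i1 i2 a b j /\ Xinf a j = alpha) /\
  (forall j, in_Sinf n k X i1 i2 a b j -> alpha <= Xinf a j).

From Stdlib Require Import Reals Relations Lra Lia List Sorting Permutation FinFun Classical.
Open Scope R_scope.

(* For a vector v on the coordinates [0, n) let its top-k
   threshold be the largest c such that at least k distinct coordinates of v
   are >= c; it equals v_{sigma(k)} for every sorting permutation sigma, so
   T_k(v) is exactly the set of coordinates lying above it, and it moves by
   at most eps when v moves by less than eps in every coordinate.
   (1) Along an edge {a,b} of E the limit rows X_a(inf) and X_b(inf) have the
       same threshold: whenever {a,b} is activated, the top-k coordinates of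
       X_a are averaged, so right afterwards X_b carries the same k values.
   (2) By connectivity of G all limit rows share one threshold tau.
   (3) For an edge {a,b}, alpha_ab = tau: coordinates averaged infinitely
       often have equal limits in X_a and X_b and lie above tau, while the
       pivot coordinate sigma(k) of X_a, averaged at infinitely many
       activations (pigeonhole), has limit at most tau.
   The file first develops sorting and thresholds, then generic facts about
   "eventually" / "frequently" and limits, then the gossip argument. *)

Lemma insert_sorted {A : Type} (le : A -> A -> Prop)
    (le_total : forall x y, le x y \/ le y x)
    (le_trans : forall x y z, le x y -> le y z -> le x z) :
  forall l a, StronglySorted le l ->
  exists l', Permutation (a :: l) l' /\ StronglySorted le l'.
Proof.
  induction l as [|b r IH]; intros a Hs.
  - exists (a :: nil). split; [apply Permutation_refl | repeat constructor].
  - apply StronglySorted_inv in Hs as [Hr Hb]. rewrite Forall_forall in Hb.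
    destruct (le_total a b) as [Hab | Hba].
    + exists (a :: b :: r). split; [apply Permutation_refl |].
      constructor; [constructor; [exact Hr | now apply Forall_forall] |].
      constructor; [exact Hab |]. apply Forall_forall.
      intros x Hx. exact (le_trans _ _ _ Hab (Hb x Hx)).
    + destruct (IH a Hr) as [r' [Hp Hs']].
      exists (b :: r'). split.
      * eapply perm_trans; [apply perm_swap | now apply perm_skip].
      * constructor; [exact Hs' |]. apply Forall_forall. intros x Hx.
        apply (Permutation_in _ (Permutation_sym Hp)) in Hx.
        destruct Hx as [<- | Hx]; auto.
Qed.

Lemma sorted_permutation_exists {A : Type} (le : A -> A -> Prop)
    (le_total : forall x y, le x y \/ le y x)
    (le_trans : forall x y z, le x y -> le y z -> le x z) :
  forall l, exists l', Permutation l l' /\ StronglySorted le l'.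
Proof.
  induction l as [|a l [l1 [Hp Hs]]].
  - exists nil. split; constructor.
  - destruct (insert_sorted le le_total le_trans l1 a Hs) as [l2 [Hp2 Hs2]].
    exists l2. split; [| exact Hs2].
    eapply perm_trans; [apply perm_skip; exact Hp | exact Hp2].
Qed.

Lemma StronglySorted_nth {A : Type} (le : A -> A -> Prop) (d : A) :
  forall l p q, StronglySorted le l -> (p < q)%nat -> (q < length l)%nat ->
  le (nth p l d) (nth q l d).
Proof.
  induction l as [|a l IH]; intros p q Hs Hpq Hq; simpl in *; [lia |].
  apply StronglySorted_inv in Hs as [Hs Ha]. rewrite Forall_forall in Ha.
  destruct p as [|p], q as [|q]; try lia.
  - apply Ha, nth_In. lia.
  - apply IH; auto; lia.
Qed.

Lemma sorting_perm_exists (n : nat) (v : nat -> R) :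
  exists sigma, sorting_perm n v sigma.
Proof.
  destruct (sorted_permutation_exists (fun i j => v i >= v j)) with (l := seq 0 n)
    as [l [Hp Hs]].
  { intros x y. destruct (Rle_dec (v x) (v y)); [right | left]; lra. }
  { intros x y z; lra. }
  assert (Hlen : length l = n)
    by (rewrite <- (Permutation_length Hp); apply length_seq).
  assert (Hnd : NoDup l) by (apply (Permutation_NoDup Hp), seq_NoDup).
  exists (fun p => nth p l 0%nat). split; [| split].
  - intros p Hpn. assert (Hin : In (nth p l 0%nat) l) by (apply nth_In; lia).
    apply (Permutation_in _ (Permutation_sym Hp)), in_seq in Hin. lia.
  - intros p q Hpn Hqn He. rewrite NoDup_nth in Hnd. apply Hnd; [lia | lia | exact He].
  - intros p q Hpq Hq. apply (StronglySorted_nth _ 0%nat l p q Hs Hpq). lia.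
Qed.

Section Thresholds.
Variables (n k : nat).
Hypotheses (hk1 : (1 <= k)%nat) (hkn : (k <= n)%nat).

Definition k_above (v : nat -> R) (c : R) : Prop :=
  exists L, NoDup L /\ length L = k /\ forall j, In j L -> (j < n)%nat /\ c <= v j.

Definition is_threshold (v : nat -> R) (tau : R) : Prop :=
  k_above v tau /\ forall c, k_above v c -> c <= tau.

Definition close (eps : R) (v w : nat -> R) : Prop :=
  forall j, (j < n)%nat -> Rabs (v j - w j) < eps.

Definition top_list (sigma : nat -> nat) : list nat := map sigma (seq 0 k).

Lemma in_Tk_intro (v : nat -> R) (sigma : nat -> nat) (j : nat) :
  sorting_perm n v sigma -> (j < n)%nat -> v (sigma (k - 1)%nat) <= v j ->
  in_Tk n k v j.
Proof. intros Hs Hj Hv. split; [exact Hj |]. exists sigma. split; [exact Hs | lra]. Qed.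

Lemma top_list_spec (v : nat -> R) (sigma : nat -> nat) :
  sorting_perm n v sigma ->
  NoDup (top_list sigma) /\ length (top_list sigma) = k /\
  forall j, In j (top_list sigma) -> (j < n)%nat /\ v (sigma (k - 1)%nat) <= v j.
Proof.
  intros Hs. pose proof Hs as [Hr [Hi Hm]]. unfold top_list. split; [| split].
  - apply Injective_map_NoDup_in; [| apply seq_NoDup].
    intros x y Hx Hy. apply in_seq in Hx, Hy. apply Hi; lia.
  - now rewrite length_map, length_seq.
  - intros j Hj. apply in_map_iff in Hj as [p [<- Hp]]. apply in_seq in Hp.
    split; [apply Hr; lia |].
    destruct (Nat.eq_dec p (k - 1)) as [-> | Hne]; [lra |].
    apply Rge_le, Hm; lia.
Qed.

(* k distinct coordinates are >= c only if the pivot is >= c: at least one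
   of them is not among the k-1 coordinates sorted before the pivot. *)
Lemma k_above_le_pivot (v : nat -> R) (sigma : nat -> nat) (c : R) :
  sorting_perm n v sigma -> k_above v c -> c <= v (sigma (k - 1)%nat).
Proof.
  intros [Hr [Hi Hm]] [L [Hnd [Hlen HL]]].
  assert (Hsur : bSurjective n sigma) by (apply bInjective_bSurjective; assumption).
  assert (Hout : exists j, In j L /\ ~ In j (map sigma (seq 0 (k - 1)))).
  { apply NNPP. intro Hno.
    assert (Hinc : incl L (map sigma (seq 0 (k - 1)))).
    { intros j Hj. apply NNPP. intro Hn. apply Hno. eauto. }
    pose proof (NoDup_incl_length Hnd Hinc) as Hl.
    rewrite length_map, length_seq in Hl. lia. }
  destruct Hout as [j [HjL Hjn]]. destruct (HL j HjL) as [Hjlt Hcj].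
  destruct (Hsur j Hjlt) as [p [Hp <-]].
  assert (Hpk : (k - 1 <= p)%nat).
  { destruct (Nat.lt_ge_cases p (k - 1)) as [Hlt |]; [| assumption].
    exfalso. apply Hjn, in_map, in_seq. lia. }
  destruct (Nat.eq_dec p (k - 1)) as [-> | Hne]; [exact Hcj |].
  assert (v (sigma (k - 1)%nat) >= v (sigma p)) by (apply Hm; lia). lra.
Qed.

Lemma pivot_is_threshold (v : nat -> R) (sigma : nat -> nat) :
  sorting_perm n v sigma -> is_threshold v (v (sigma (k - 1)%nat)).
Proof.
  intros Hs. split.
  - destruct (top_list_spec v sigma Hs) as [Hnd [Hlen Htop]].
    exists (top_list sigma). auto.
  - intros c. apply (k_above_le_pivot v sigma c Hs).
Qed.

Lemma threshold_exists (v : nat -> R) : exists tau, is_threshold v tau.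
Proof.
  destruct (sorting_perm_exists n v) as [sigma Hs].
  eexists. exact (pivot_is_threshold v sigma Hs).
Qed.

Lemma threshold_le_in_Tk (v : nat -> R) (tau : R) (j : nat) :
  is_threshold v tau -> in_Tk n k v j -> tau <= v j.
Proof.
  intros [Htau _] [_ [sigma [Hs Hv]]].
  pose proof (k_above_le_pivot v sigma tau Hs Htau). lra.
Qed.

Lemma pivot_in_Tk (v : nat -> R) (sigma : nat -> nat) :
  sorting_perm n v sigma -> (sigma (k - 1)%nat < n)%nat /\ in_Tk n k v (sigma (k - 1)%nat).
Proof.
  intros Hs. assert (Hlt : (sigma (k - 1)%nat < n)%nat) by (apply (proj1 Hs); lia).
  split; [exact Hlt |]. apply (in_Tk_intro v sigma); [exact Hs | exact Hlt | lra].
Qed.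

Lemma threshold_close (v w : nat -> R) (tv tw eps : R) :
  is_threshold v tv -> is_threshold w tw -> close eps v w -> tv - eps <= tw.
Proof.
  intros [[L [Hnd [Hlen HL]]] _] [_ Hmax] Hvw. apply Hmax.
  exists L. split; [exact Hnd | split; [exact Hlen |]].
  intros j Hj. destruct (HL j Hj) as [Hjn Hv]. split; [exact Hjn |].
  pose proof (Hvw j Hjn) as Hd. apply Rabs_def2 in Hd. lra.
Qed.

End Thresholds.

Definition eventually (P : nat -> Prop) : Prop :=
  exists N, forall t, (t >= N)%nat -> P t.

Definition frequently (P : nat -> Prop) : Prop :=
  forall T, exists t, (t >= T)%nat /\ P t.

Lemma eventually_and (P Q : nat -> Prop) :
  eventually P -> eventually Q -> eventually (fun t => P t /\ Q t).
Proof.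
  intros [N1 H1] [N2 H2]. exists (Nat.max N1 N2).
  intros t Ht. split; [apply H1 | apply H2]; lia.
Qed.

Lemma eventually_succ (P : nat -> Prop) :
  eventually P -> eventually (fun t => P (S t)).
Proof. intros [N H]. exists N. intros t Ht. apply H. lia. Qed.

Lemma frequently_eventually (P Q : nat -> Prop) :
  frequently P -> eventually Q -> frequently (fun t => P t /\ Q t).
Proof.
  intros HP [N HQ] T. destruct (HP (Nat.max T N)) as [t [Ht Hp]].
  exists t. split; [lia | split; [exact Hp | apply HQ; lia]].
Qed.

Lemma frequently_succ (P : nat -> Prop) :
  frequently (fun t => P (S t)) -> frequently P.
Proof. intros H T. destruct (H T) as [t [Ht Hp]]. exists (S t). split; [lia | exact Hp]. Qed.

Lemma frequently_or (P Q : nat -> Prop) :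
  frequently (fun t => P t \/ Q t) -> frequently P \/ frequently Q.
Proof.
  intros H. destruct (classic (frequently P)) as [HP | HP]; [now left | right].
  apply not_all_ex_not in HP as [T0 HT0]. intros T.
  destruct (H (Nat.max T T0)) as [t [Ht [Hp | Hq]]].
  - exfalso. apply HT0. exists t. split; [lia | exact Hp].
  - exists t. split; [lia | exact Hq].
Qed.

Lemma frequently_pigeonhole (P : nat -> nat -> Prop) (N : nat) :
  frequently (fun t => exists j, (j < N)%nat /\ P t j) ->
  exists j, (j < N)%nat /\ frequently (fun t => P t j).
Proof.
  induction N as [|N IH]; intros H.
  - destruct (H 0%nat) as [t [_ [j [Hj _]]]]. lia.
  - destruct (frequently_or (fun t => exists j, (j < N)%nat /\ P t j) (fun t => P t N))
      as [HN | HN].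
    + intros T. destruct (H T) as [t [Ht [j [Hj Hp]]]]. exists t. split; [exact Ht |].
      destruct (Nat.eq_dec j N) as [-> | Hne]; [now right |].
      left. exists j. split; [lia | exact Hp].
    + destruct (IH HN) as [j [Hj Hp]]. exists j. split; [lia | exact Hp].
    + exists N. split; [lia | exact HN].
Qed.

Lemma Un_cv_eventually (u : nat -> R) (l eps : R) :
  Un_cv u l -> 0 < eps -> eventually (fun t => Rabs (u t - l) < eps).
Proof. intros Hu He. destruct (Hu eps He) as [N HN]. exists N. exact HN. Qed.

Lemma eventually_close (n : nat) (u : nat -> nat -> R) (l : nat -> R) (eps : R) :
  (forall j, (j < n)%nat -> Un_cv (fun t => u t j) (l j)) -> 0 < eps ->
  eventually (fun t => close n eps (u t) l).
Proof.
  intros Hc He. induction n as [|n IH].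
  - exists 0%nat. intros t _ j Hj. lia.
  - destruct (eventually_and _ _ (IH (fun j Hj => Hc j ltac:(lia)))
      (Un_cv_eventually _ _ _ (Hc n (Nat.lt_succ_diag_r n)) He)) as [N HN].
    exists N. intros t Ht j Hj. destruct (HN t Ht) as [Hlt Hn].
    destruct (Nat.eq_dec j n) as [-> | Hne]; [exact Hn | apply Hlt; lia].
Qed.

Lemma limit_le_frequently (u : nat -> R) (l c : R) :
  Un_cv u l -> (forall eps, 0 < eps -> frequently (fun t => u t <= c + eps)) -> l <= c.
Proof.
  intros Hu H. apply Rnot_lt_le. intro Hlt.
  assert (He : 0 < (l - c) / 2) by lra.
  destruct (frequently_eventually _ _ (H _ He) (Un_cv_eventually u l _ Hu He) 0%nat)
    as [t [_ [Hle Hd]]].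
  apply Rabs_def2 in Hd. lra.
Qed.

Lemma limit_ge_frequently (u : nat -> R) (l c : R) :
  Un_cv u l -> (forall eps, 0 < eps -> frequently (fun t => c - eps <= u t)) -> c <= l.
Proof.
  intros Hu H. apply Rnot_lt_le. intro Hlt.
  assert (He : 0 < (c - l) / 2) by lra.
  destruct (frequently_eventually _ _ (H _ He) (Un_cv_eventually u l _ Hu He) 0%nat)
    as [t [_ [Hle Hd]]].
  apply Rabs_def2 in Hd. lra.
Qed.

Lemma limit_eq_frequently_eq (u w : nat -> R) (lu lw : R) :
  Un_cv u lu -> Un_cv w lw -> frequently (fun t => u t = w t) -> lu = lw.
Proof.
  intros Hu Hw Heq.
  assert (Hle : forall u w lu lw, Un_cv u lu -> Un_cv w lw ->
            frequently (fun t => u t = w t) -> lu <= lw).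
  { clear. intros u w lu lw Hu Hw Heq. apply (limit_le_frequently u lu lw Hu).
    intros eps He T.
    destruct (frequently_eventually _ _ Heq (Un_cv_eventually w lw eps Hw He) T)
      as [t [Ht [Huw Hd]]].
    exists t. split; [exact Ht |]. apply Rabs_def2 in Hd. lra. }
  apply Rle_antisym; [apply (Hle u w) | apply (Hle w u)]; auto.
  intros T. destruct (Heq T) as [t [Ht E]]. eauto.
Qed.

Lemma in_S_cases (n k : nat) (X : nat -> nat -> nat -> R) (i1 i2 : nat -> nat)
    (t a b j : nat) :
  pair_is i1 i2 t a b -> in_S n k X i1 i2 t j ->
  in_Tk n k (X t a) j \/ in_Tk n k (X t b) j.
Proof. unfold in_S. intros [[-> ->] | [-> ->]] [H | H]; auto. Qed.

Lemma in_S_of_in_Tk (n k : nat) (X : nat -> nat -> nat -> R) (i1 i2 : nat -> nat)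
    (t a b j : nat) :
  pair_is i1 i2 t a b -> in_Tk n k (X t a) j -> in_S n k X i1 i2 t j.
Proof. unfold in_S. intros [[-> ->] | [-> ->]] H; auto. Qed.

Lemma in_E_sym (m : nat) (i1 i2 : nat -> nat) (a b : nat) :
  in_E m i1 i2 a b -> in_E m i1 i2 b a.
Proof.
  intros [Ha [Hb [Hne H]]]. split; [exact Hb | split; [exact Ha | split; [auto |]]].
  intros T. destruct (H T) as [t [Ht Hp]]. exists t. split; [exact Ht |].
  unfold pair_is in *. tauto.
Qed.

Section Gossip.
Variables (m n k : nat) (i1 i2 : nat -> nat).
Variables (X : nat -> nat -> nat -> R) (Xinf : nat -> nat -> R).
Hypotheses (hk1 : (1 <= k)%nat) (hkn : (k <= n)%nat).
Hypothesis hdyn : gossip_dynamics m n k X i1 i2.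
Hypothesis hlim : forall i j, (i < m)%nat -> (j < n)%nat ->
  Un_cv (fun t => X t i j) (Xinf i j).

Lemma activation_agrees (t a b j : nat) :
  (a < m)%nat -> (b < m)%nat -> (j < n)%nat -> pair_is i1 i2 t a b ->
  in_S n k X i1 i2 t j -> X (S t) a j = X (S t) b j.
Proof.
  intros Ha Hb Hj Hp HS.
  destruct (hdyn t a j Ha Hj) as [Ea _], (hdyn t b j Hb Hj) as [Eb _].
  rewrite Ea, Eb; [reflexivity | |]; split; try exact HS;
    unfold active; destruct Hp as [[-> ->] | [-> ->]]; auto.
Qed.

Lemma row_eventually_close (i : nat) (eps : R) :
  (i < m)%nat -> 0 < eps -> eventually (fun t => close n eps (X t i) (Xinf i)).
Proof. intros Hi He. apply eventually_close; [intros j Hj; apply hlim | ]; assumption. Qed.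

Lemma threshold_eventually_near (i : nat) (tau eps : R) :
  (i < m)%nat -> is_threshold n k (Xinf i) tau -> 0 < eps ->
  eventually (fun t => forall tt, is_threshold n k (X t i) tt ->
                         tau - eps <= tt <= tau + eps).
Proof.
  intros Hi Htau He. destruct (row_eventually_close i eps Hi He) as [N HN].
  exists N. intros t Ht tt Htt. split.
  - apply (threshold_close n k (Xinf i) (X t i)); auto.
    intros j Hj. rewrite Rabs_minus_sym. apply HN; assumption.
  - assert (tt - eps <= tau); [| lra].
    apply (threshold_close n k (X t i) (Xinf i)); auto.
Qed.

Lemma frequently_top_ge_threshold (i j : nat) (tau : R) :
  (i < m)%nat -> is_threshold n k (Xinf i) tau ->
  frequently (fun t => in_Tk n k (X t i) j) -> tau <= Xinf i j.
Proof.
  intros Hi Htau Hfreq.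
  assert (Hj : (j < n)%nat) by (destruct (Hfreq 0%nat) as [t [_ [Hj _]]]; exact Hj).
  apply (limit_ge_frequently (fun t => X t i j)); [apply hlim; assumption |].
  intros eps He T.
  destruct (frequently_eventually _ _ Hfreq
              (threshold_eventually_near i tau eps Hi Htau He) T) as [t [Ht [HT Hnear]]].
  exists t. split; [exact Ht |].
  destruct (threshold_exists n k hk1 hkn (X t i)) as [tt Htt].
  pose proof (Hnear tt Htt). pose proof (threshold_le_in_Tk n k hk1 hkn _ _ _ Htt HT). lra.
Qed.

(* (1) Along an edge the threshold cannot decrease: at an activation time the
   top-k coordinates of X_a are copied into X_b. *)
Lemma edge_threshold_le (a b : nat) (ta tb : R) :
  in_E m i1 i2 a b -> is_threshold n k (Xinf a) ta -> is_threshold n k (Xinf b) tb ->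
  ta <= tb.
Proof.
  intros [Ha [Hb [_ Hfreq]]] Hta [_ Htb].
  apply Rle_plus_epsilon. intros eps He.
  assert (He4 : 0 < eps / 4) by lra.
  destruct (frequently_eventually _ _ Hfreq
    (eventually_and _ _ (threshold_eventually_near a ta _ Ha Hta He4)
      (eventually_and _ _
        (eventually_and _ _ (row_eventually_close a _ Ha He4)
                             (eventually_succ _ (row_eventually_close a _ Ha He4)))
        (eventually_succ _ (row_eventually_close b _ Hb He4)))) 0%nat)
    as [t [_ [Hp [Hnear [[Ca Ca'] Cb']]]]].
  destruct (sorting_perm_exists n (X t a)) as [sigma Hs].
  pose proof (Hnear _ (pivot_is_threshold n k hk1 hkn _ _ Hs)) as Hpiv.
  destruct (top_list_spec n k hk1 hkn (X t a) sigma Hs) as [Hnd [Hlen Htop]].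
  assert (ta - eps <= tb); [| lra].
  apply Htb. exists (top_list k sigma). split; [exact Hnd | split; [exact Hlen |]].
  intros j Hj. destruct (Htop j Hj) as [Hjn Hv]. split; [exact Hjn |].
  assert (HS : in_S n k X i1 i2 t j)
    by exact (in_S_of_in_Tk n k X i1 i2 t a b j Hp (in_Tk_intro n k _ _ _ Hs Hjn Hv)).
  pose proof (activation_agrees t a b j Ha Hb Hjn Hp HS) as Heq.
  pose proof (Ca j Hjn) as E1. pose proof (Ca' j Hjn) as E2. pose proof (Cb' j Hjn) as E3.
  apply Rabs_def2 in E1, E2, E3. lra.
Qed.

Lemma edge_threshold_eq (a b : nat) (ta tb : R) :
  in_E m i1 i2 a b -> is_threshold n k (Xinf a) ta -> is_threshold n k (Xinf b) tb ->
  ta = tb.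
Proof.
  intros HE Ha Hb. apply Rle_antisym.
  - exact (edge_threshold_le a b ta tb HE Ha Hb).
  - exact (edge_threshold_le b a tb ta (in_E_sym m i1 i2 a b HE) Hb Ha).
Qed.

Lemma path_threshold_eq (a b : nat) :
  clos_refl_trans nat (in_E m i1 i2) a b ->
  forall ta tb, is_threshold n k (Xinf a) ta -> is_threshold n k (Xinf b) tb -> ta = tb.
Proof.
  induction 1 as [x y Hxy | x | x y z _ IH1 _ IH2]; intros ta tb Ha Hb.
  - exact (edge_threshold_eq x y ta tb Hxy Ha Hb).
  - apply Rle_antisym; [apply (proj2 Hb), Ha | apply (proj2 Ha), Hb].
  - destruct (threshold_exists n k hk1 hkn (Xinf y)) as [ty Hy].
    rewrite (IH1 ta ty Ha Hy). exact (IH2 ty tb Hy Hb).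
Qed.

Lemma Sinf_limits_agree (a b j : nat) :
  in_E m i1 i2 a b -> in_Sinf n k X i1 i2 a b j -> Xinf a j = Xinf b j.
Proof.
  intros [Ha [Hb _]] Hj.
  assert (Hjn : (j < n)%nat)
    by (destruct (Hj 0%nat) as [t [_ [_ [[Hjn _] | [Hjn _]]]]]; exact Hjn).
  apply (limit_eq_frequently_eq (fun t => X t a j) (fun t => X t b j));
    [apply hlim; assumption | apply hlim; assumption |].
  apply frequently_succ. intros T. destruct (Hj T) as [t [Ht [Hp HS]]].
  exists t. split; [exact Ht | exact (activation_agrees t a b j Ha Hb Hjn Hp HS)].
Qed.

(* Coordinates averaged infinitely often lie above the threshold: infinitely
   often they are in T_k of X_a(t), or infinitely often in T_k of X_b(t). *)
Lemma threshold_le_Sinf (a b j : nat) (tau : R) :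
  in_E m i1 i2 a b -> is_threshold n k (Xinf a) tau ->
  in_Sinf n k X i1 i2 a b j -> tau <= Xinf a j.
Proof.
  intros HE Htau Hj. pose proof HE as [Ha [Hb _]].
  destruct (threshold_exists n k hk1 hkn (Xinf b)) as [tb Htb].
  destruct (frequently_or (fun t => in_Tk n k (X t a) j) (fun t => in_Tk n k (X t b) j))
    as [Hfa | Hfb].
  - intros T. destruct (Hj T) as [t [Ht [Hp HS]]].
    exists t. split; [exact Ht | exact (in_S_cases n k X i1 i2 t a b j Hp HS)].
  - exact (frequently_top_ge_threshold a j tau Ha Htau Hfa).
  - rewrite (edge_threshold_eq a b tau tb HE Htau Htb), (Sinf_limits_agree a b j HE Hj).
    exact (frequently_top_ge_threshold b j tb Hb Htb Hfb).
Qed.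

(* The minimum is attained: some coordinate is the pivot of X_a(t) at
   infinitely many activations of {a, b}; its limit is at most the threshold. *)
Lemma pivot_in_Sinf (a b : nat) (tau : R) :
  in_E m i1 i2 a b -> is_threshold n k (Xinf a) tau ->
  exists j, in_Sinf n k X i1 i2 a b j /\ Xinf a j <= tau.
Proof.
  intros [Ha [_ [_ Hfreq]]] Htau.
  destruct (frequently_pigeonhole (fun t j => pair_is i1 i2 t a b /\
              exists sigma, sorting_perm n (X t a) sigma /\ j = sigma (k - 1)%nat) n)
    as [j [Hjn Hj]].
  { intros T. destruct (Hfreq T) as [t [Ht Hp]]. exists t. split; [exact Ht |].
    destruct (sorting_perm_exists n (X t a)) as [sigma Hs].
    exists (sigma (k - 1)%nat). split; [exact (proj1 (pivot_in_Tk n k hk1 hkn _ _ Hs)) |].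
    split; [exact Hp | now exists sigma]. }
  exists j. split.
  - intros T. destruct (Hj T) as [t [Ht [Hp [sigma [Hs ->]]]]].
    exists t. split; [exact Ht | split; [exact Hp |]].
    exact (in_S_of_in_Tk n k X i1 i2 t a b _ Hp (proj2 (pivot_in_Tk n k hk1 hkn _ _ Hs))).
  - apply (limit_le_frequently (fun t => X t a j)); [apply hlim; assumption |].
    intros eps He T.
    destruct (frequently_eventually _ _ Hj (threshold_eventually_near a tau eps Ha Htau He) T)
      as [t [Ht [[_ [sigma [Hs ->]]] Hnear]]].
    exists t. split; [exact Ht |].
    apply (Hnear _ (pivot_is_threshold n k hk1 hkn _ _ Hs)).
Qed.

Lemma alpha_is_threshold (a b : nat) (tau : R) :
  in_E m i1 i2 a b -> is_threshold n k (Xinf a) tau -> is_alpha n k X Xinf i1 i2 a b tau.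
Proof.
  intros HE Htau. split.
  - destruct (pivot_in_Sinf a b tau HE Htau) as [j [Hj Hle]].
    exists j. split; [exact Hj |].
    apply Rle_antisym; [exact Hle | exact (threshold_le_Sinf a b j tau HE Htau Hj)].
  - intros j Hj. exact (threshold_le_Sinf a b j tau HE Htau Hj).
Qed.

End Gossip.

Theorem mainTheorem5 (m n k : nat) (i1 i2 : nat -> nat)
    (X : nat -> nat -> nat -> R) (Xinf : nat -> nat -> R)
    (hm : (2 <= m)%nat) (hn : (1 <= n)%nat) (hk1 : (1 <= k)%nat) (hkn : (k <= n)%nat)
    (hpair : forall t, (i1 t < m)%nat /\ (i2 t < m)%nat /\ i1 t <> i2 t)
    (hdyn : gossip_dynamics m n k X i1 i2)
    (hconn : connected_E m i1 i2)
    (hlim : forall i j, (i < m)%nat -> (j < n)%nat ->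
              Un_cv (fun t => X t i j) (Xinf i j))
    (a b a' b' : nat)
    (hab : in_E m i1 i2 a b) (hab' : in_E m i1 i2 a' b') :
  exists alpha, is_alpha n k X Xinf i1 i2 a b alpha /\
                is_alpha n k X Xinf i1 i2 a' b' alpha.
Proof.
  destruct (threshold_exists n k hk1 hkn (Xinf a)) as [tau Htau].
  destruct (threshold_exists n k hk1 hkn (Xinf a')) as [tau' Htau'].
  assert (Heq : tau = tau').
  { apply (path_threshold_eq m n k i1 i2 X Xinf hk1 hkn hdyn hlim a a');
      [apply hconn; [apply hab | apply hab'] | exact Htau | exact Htau']. }
  subst tau'. exists tau. split.
  - exact (alpha_is_threshold m n k i1 i2 X Xinf hk1 hkn hdyn hlim a b tau hab Htau).
  - exact (alpha_is_threshold m n k i1 i2 X Xinf hk1 hkn hdyn hlim a' b' tau hab' Htau').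
Qed.
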